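(* Let $\Pi$ be an equitative protocol for a distribution type $\tau$ and let $\rho$ be a run of $\Pi$. Then there is a constant $\gamma=\gamma(\rho)\in(0,1]$ such that for every deal $H$ of type $\tau$, $\Pr(\rho\mid H)=\gamma$ if $H\in\mathrm{Poss}(\rho)$ and $\Pr(\rho\mid H)=0$ otherwise.
   Context: Let $\mathcal A$ be a finite set of agents listed in speaking order $P_0,\dots,P_m$. A distribution type is a vector $\tau=(\tau_P)_{P\in\mathcal A}$ of positive integers, $|\tau|=\sum_P\tau_P$. The deck $\Omega$ is a set of $|\tau|$ cards; a deal of type $\tau$ is a partition $H=(H_P)_P$ of $\Omega$ with $|H_P|=\tau_P$. Fix a set of tokens; a run is a finite sequence $\rho=a_0,\dots,a_n$ of tokens, $\rho_{<k}=a_0,\dots,a_{k-1}$. A protocol for $\tau$ is a function $\Pi$ assigning to every deal $H$ and run $\rho$ a set of tokens $\Pi(H,\rho)$ such that if $k$ is the remainder of $|\rho|$ modulo $m+1$ and $H_{P_k}=H'_{P_k}$, then $\Pi(H,\rho)=\Pi(H',\rho)$. An execution is a pair $(H,\rho)$ with $a_k\in\Pi(H,\rho_{<k})$ for all $k\le n$; $\rho$ is a run of $\Pi$ if some $(H,\rho)$ is an execution. $\mathrm{Poss}(\rho)$ is the set of deals $H$ such that $(H,\rho)$ is an execution. $\Pi$ is equitative if for every run $\rho$ of $\Pi$ there is $k=k(\rho)$ with $|\Pi(H,\rho)|=k$ for all $H\in\mathrm{Poss}(\rho)$. Probability model: given the deal $H$, starting from the empty run, while $\Pi(H,\rho)\neq\emptyset$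 for the current run $\rho$ a token is drawn uniformly at random from $\Pi(H,\rho)$ and appended; $\Pr(\rho\mid H)$ is the probability that the first $|\rho|$ tokens produced are exactly $\rho$. *)

From HB Require Import structures.
From mathcomp Require Import all_boot all_order all_algebra.
From mathcomp Require Import finmap.
Set Implicit Arguments. Unset Strict Implicit. Unset Printing Implicit Defensive.
Import Order.TTheory GRing.Theory Num.Theory.
Local Open Scope fset_scope.

(* Agents P_0,...,P_m are 'I_(m.+1) (speaking order = order of indices).
   Cards form a finite type [Card]; a deal is a map assigning each card to the
   agent holding it; H_P is the preimage of P.
   Tokens form a choiceType [T]; Pi(H, rho) is a finite set {fset T}. *)

Section Defs.
Variables (m : nat) (Card : finType) (T : choiceType).

Definition deal := {ffun Card -> 'I_m.+1}.

Definition hand (H : deal) (P : 'I_m.+1) : {set Card} := [set c | H c == P].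

Definition is_deal (tau : 'I_m.+1 -> nat) (H : deal) : Prop :=
  forall P, #|hand H P| = tau P.

Definition distribution_type (tau : 'I_m.+1 -> nat) : Prop :=
  (forall P, 0 < tau P)%N /\ #|Card| = (\sum_(P < m.+1) tau P)%N.

Definition speaker (rho : seq T) : 'I_m.+1 := inord (size rho %% m.+1).

Definition is_protocol (tau : 'I_m.+1 -> nat)
    (Pi : deal -> seq T -> {fset T}) : Prop :=
  forall (H H' : deal) (rho : seq T), is_deal tau H -> is_deal tau H' ->
    hand H (speaker rho) = hand H' (speaker rho) -> Pi H rho = Pi H' rho.

Definition execution (Pi : deal -> seq T -> {fset T}) (H : deal) (rho : seq T)
    : Prop :=
  forall k, (k < size rho)%N ->
    forall a0 : T, nth a0 rho k \in Pi H (take k rho).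

Definition is_run (tau : 'I_m.+1 -> nat) (Pi : deal -> seq T -> {fset T})
    (rho : seq T) : Prop :=
  exists H, is_deal tau H /\ execution Pi H rho.

Definition Poss (tau : 'I_m.+1 -> nat) (Pi : deal -> seq T -> {fset T})
    (rho : seq T) (H : deal) : Prop :=
  is_deal tau H /\ execution Pi H rho.

Definition equitative (tau : 'I_m.+1 -> nat)
    (Pi : deal -> seq T -> {fset T}) : Prop :=
  forall rho, is_run tau Pi rho ->
    exists k : nat, forall H, Poss tau Pi rho H -> #|` Pi H rho| = k.

(* Pr(rho | H): probability that the random process (drawing uniformly from
   Pi(H, current run) while it is nonempty) produces rho as its first |rho|
   tokens.  By the chain rule this is the product over k < |rho| of the
   probability that the k-th draw is a_k given the first k draws were rho_<k,
   namely 1/|Pi(H,rho_<k)| if a_k \in Pi(H,rho_<k), and 0 otherwise (in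
   particular 0 if the process has stopped, i.e. Pi(H,rho_<k) is empty). *)
Definition prob_run (R : realFieldType) (Pi : deal -> seq T -> {fset T})
    (H : deal) (rho : seq T) : R :=
  \prod_(k < size rho)
    (match rho with
     | [::] => 0
     | a0 :: _ =>
       if nth a0 rho k \in Pi H (take k rho)
       then (#|` Pi H (take k rho)|%:R)^-1 else 0
     end)%R.

End Defs.

From HB Require Import structures.
From mathcomp Require Import all_boot all_order all_algebra.
From mathcomp Require Import finmap.
Import Order.TTheory GRing.Theory Num.Theory.
Local Open Scope ring_scope.

(* By the chain rule, Pr(rho | H) vanishes unless (H, rho) is an execution, and
   then it is the product of the inverses of the option counts |Pi(H, rho_<k)|.
   Each prefix rho_<k of a run is again a run, so equitativity makes these
   counts independent of H in Poss(rho); hence so is the product, which is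
   positive and at most 1 because every count is a positive integer. *)

Section ProbRun.
Context {R : realFieldType} {m : nat} {Card : finType} {T : choiceType}.
Context {Pi : deal m Card -> seq T -> {fset T}}.
Implicit Types (H : deal m Card) (rho : seq T).

Lemma execution_take H rho k :
  execution Pi H rho -> execution Pi H (take k rho).
Proof.
move=> E j lt_j a0.
have /andP[ltjk ltj] : (j < k)%N && (j < size rho)%N.
  by move: lt_j; rewrite size_take_min leq_min.
by rewrite nth_take // (take_takel _ (ltnW ltjk)); apply: E.
Qed.

Lemma execution_card_gt0 H rho k :
  execution Pi H rho -> (k < size rho)%N -> (0 < #|` Pi H (take k rho)|)%N.
Proof.
case: rho => [//|a0 r] E ltk; rewrite cardfs_gt0.
by apply/fset0Pn; exists (nth a0 (a0 :: r) k); apply: E.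
Qed.

Lemma prob_run_execution {H rho} : execution Pi H rho ->
  prob_run R Pi H rho = \prod_(k < size rho) (#|` Pi H (take k rho)|%:R)^-1.
Proof.
rewrite /prob_run; case: rho => [|a0 r] E; first by rewrite !big_ord0.
by apply: eq_bigr => k _; rewrite E.
Qed.

Lemma prob_run_not_execution H rho :
  ~ execution Pi H rho -> prob_run R Pi H rho = 0.
Proof.
rewrite /prob_run; case: rho => [|a0 r] NE; first by case: NE.
have [k notin_k] : exists k : 'I_(size (a0 :: r)),
    nth a0 (a0 :: r) k \notin Pi H (take k (a0 :: r)).
  apply/existsP; rewrite -negb_forall; apply/negP => /forallP inPi; apply: NE.
  by move=> k ltk b; rewrite (set_nth_default a0 b ltk) (inPi (Ordinal ltk)).
by rewrite (bigD1 k) //= (negbTE notin_k) mul0r.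
Qed.

Lemma prob_run_execution_gt0 {H rho} :
  execution Pi H rho -> 0 < prob_run R Pi H rho.
Proof.
move=> E; rewrite prob_run_execution //; apply: prodr_gt0 => k _.
by rewrite invr_gt0 ltr0n execution_card_gt0.
Qed.

Lemma prob_run_le1 H rho : prob_run R Pi H rho <= 1.
Proof.
rewrite /prob_run; case: rho => [|a0 r]; first by rewrite big_ord0.
apply: prodr_ile1 => k _; case: ifP => [in_k|_]; last by rewrite lexx ler01.
have n_gt0 : (0 < #|` Pi H (take k (a0 :: r))|)%N.
  by rewrite cardfs_gt0; apply/fset0Pn; exists (nth a0 (a0 :: r) k).
by rewrite invr_ge0 ler0n invf_le1 ?ltr0n ?ler1n.
Qed.

Context {tau : 'I_m.+1 -> nat}.

Lemma Poss_take k {rho H} : Poss tau Pi rho H -> Poss tau Pi (take k rho) H.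
Proof. by move=> [DH EH]; split=> //; apply: execution_take. Qed.

Lemma equitative_prob_run {rho H H'} : equitative tau Pi ->
  Poss tau Pi rho H -> Poss tau Pi rho H' ->
  prob_run R Pi H rho = prob_run R Pi H' rho.
Proof.
move=> eqPi PH PH'.
rewrite (prob_run_execution PH.2) (prob_run_execution PH'.2).
apply: eq_bigr => k _.
have [c count_c] := eqPi (take k rho) (ex_intro _ H (Poss_take k PH)).
by rewrite (count_c H (Poss_take k PH)) (count_c H' (Poss_take k PH')).
Qed.

End ProbRun.

Theorem mainTheorem3 (R : realFieldType) (m : nat) (Card : finType)
    (T : choiceType) (tau : 'I_m.+1 -> nat)
    (Pi : deal m Card -> seq T -> {fset T}) (rho : seq T) :
  distribution_type Card tau ->
  is_protocol tau Pi ->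
  equitative tau Pi ->
  is_run tau Pi rho ->
  exists gamma : R, 0 < gamma /\ gamma <= 1 /\
    forall H : deal m Card, is_deal tau H ->
      (Poss tau Pi rho H -> prob_run R Pi H rho = gamma) /\
      (~ Poss tau Pi rho H -> prob_run R Pi H rho = 0).
Proof.
move=> _ _ eqPi [H0 PH0].
exists (prob_run R Pi H0 rho); split; first exact: prob_run_execution_gt0 PH0.2.
split; first exact: prob_run_le1.
move=> H DH; split=> [PH|notPH]; first exact: equitative_prob_run eqPi PH PH0.
by apply: prob_run_not_execution => EH; apply: notPH.
Qed.
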